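(* Let $\mathbf{P}=(X,P)$ be a dually-CPT poset whose comparability graph is connected. Then the quotient poset $\mathbf{P}/\mathcal{M}(\mathbf{P})$ is dually-CPT and every maximal strong module of $\mathbf{P}$ induces a CI poset. In particular, if the quotient poset is CI, then $\mathbf{P}$ is CI.
   Context: A poset $\mathbf{P}$ is CPT if there is a tree $T$ and paths $W_x$ of $T$ ($x\in X$) with $x<y$ iff $W_x\subsetneq W_y$; it is CI if this can be done with $T$ a path (containment order of intervals). $\mathbf{P}$ is dually-CPT if $\mathbf{P}$ and its dual $\mathbf{P}^d$ are both CPT. A set $M\subseteq X$ is a module if every $y\in X\setminus M$ is either comparable to all elements of $M$ or incomparable to all elements of $M$. A module $M$ is strong if for every module $M'$, either $M\cap M'=\emptyset$, $M\subseteq M'$ or $M'\subseteq M$. The maximal strong modules (strong modules $M\ne X$ maximal under inclusion) partition $X$; this partition is $\mathcal{M}(\mathbf{P})=\{M_1,\dots,M_k\}$. The quotient poset $\mathbf{P}/\mathcal{M}(\mathbf{P})$ has one vertex $v_i$ per part $M_i$, with $v_i,v_j$ ordered as any (equivalently every) $x\in M_i$, $y\in M_j$ are ordered in $\mathbf{P}$ (it is isomorphic to the subposet of $\mathbf{P}$ induced by one representative of each part). A module ''is CI'' means the induced subposet is CI. *)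

(* Finite posets are given as a strict order relation
   [lt : rel X] on a finite type [X]. *)
From mathcomp Require Import all_boot.
Set Implicit Arguments. Unset Strict Implicit. Unset Printing Implicit Defensive.

Definition is_poset (X : finType) (lt : rel X) : Prop :=
  irreflexive lt /\ transitive lt.

Definition dual_rel (X : finType) (lt : rel X) : rel X := fun x y => lt y x.

Definition comparable (X : finType) (lt : rel X) : rel X :=
  fun x y => lt x y || lt y x.

Definition comp_connected (X : finType) (lt : rel X) : Prop :=
  forall x y : X, connect (comparable lt) x y.

Definition is_tree (V : finType) (e : rel V) : Prop :=
  [/\ symmetric e, irreflexive e,
      (forall u v : V, connect e u v) &
      (forall c : seq V, uniq c -> 3 <= size c -> ~~ cycle e c)].

Definition is_graph_path (V : finType) (e : rel V) (W : {set V}) : Prop :=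
  exists (v : V) (s : seq V),
    [/\ path e v s, uniq (v :: s) & W = [set x in v :: s]].

Definition path_rep (X V : finType) (lt : rel X) (e : rel V)
    (W : X -> {set V}) : Prop :=
  (forall x, is_graph_path e (W x)) /\
  (forall x y, lt x y = (W x \proper W y)).

Definition CPT (X : finType) (lt : rel X) : Prop :=
  exists (V : finType) (e : rel V) (W : X -> {set V}),
    is_tree e /\ path_rep lt e W.

(* CI: containment of intervals, i.e. paths in a tree which is itself a path
   (a tree of maximum degree at most 2) *)
Definition CI (X : finType) (lt : rel X) : Prop :=
  exists (V : finType) (e : rel V) (W : X -> {set V}),
    [/\ is_tree e, (forall v : V, #|[set w | e v w]| <= 2) & path_rep lt e W].

Definition dually_CPT (X : finType) (lt : rel X) : Prop :=
  CPT lt /\ CPT (dual_rel lt).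

(* modules (nonempty by convention); boolean since everything is finite *)
Definition is_module (X : finType) (lt : rel X) (M : {set X}) : bool :=
  (M != set0) &&
  [forall y in ~: M,
    [forall m in M, comparable lt y m] || [forall m in M, ~~ comparable lt y m]].

Definition strong_module (X : finType) (lt : rel X) (M : {set X}) : bool :=
  is_module lt M &&
  [forall M' : {set X}, is_module lt M' ==>
    [|| M :&: M' == set0, M \subset M' | M' \subset M]].

Definition max_strong_module (X : finType) (lt : rel X) (M : {set X}) : bool :=
  [&& strong_module lt M, M != setT &
      [forall M' : {set X},
         (strong_module lt M' && (M' != setT) && (M \subset M')) ==> (M' == M)]].

Definition msm (X : finType) (lt : rel X) : {set {set X}} :=
  [set M | max_strong_module lt M].

Definition sub_rel (X : finType) (lt : rel X) (M : {set X}) :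
    rel {x : X | x \in M} :=
  fun a b => lt (val a) (val b).

Definition quot_lt (X : finType) (lt : rel X) :
    rel {M : {set X} | M \in msm lt} :=
  fun A B => [forall x in val A, forall y in val B, lt x y].

Arguments quot_lt {X} lt.
Arguments sub_rel {X} lt M.
Arguments msm {X} lt.

(* The key fact is that no element y outside a maximal strong module M lies
   between two elements of M.  If the incomparability graph is disconnected, M
   is one of its components, and an incomparability path through M from below
   y to above y would give comparable neighbours.  Otherwise M, enlarged by the
   elements between two of its elements, is a proper module; a maximal proper
   module containing it is strong because both the comparability and the
   incomparability graph are connected, contradicting the maximality of M.

   Hence elements of distinct maximal strong modules compare as their modules
   do, so the quotient is an induced subposet and inherits both CPT
   representations.  As the comparability graph is connected, some y outside M
   lies above or below all of M, so M is represented inside the path W_y of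
   the representation of P or of its dual; subpaths of a path are intervals,
   so M is CI.  Finally, interval representations of the modules substituted
   into one of the quotient with distinct endpoints represent P. *)

From Pilot Require Import Defs.
From mathcomp Require Import all_boot zify.
Set Implicit Arguments. Unset Strict Implicit. Unset Printing Implicit Defensive.

Lemma connect_exit (T : finType) (e : rel T) (S : {set T}) x y :
  connect e x y -> x \in S -> y \notin S ->
  exists a b, [/\ a \in S, b \notin S, e a b & connect e x a].
Proof.
move=> /connectP [p]; elim: p x => [|z p IH] x /=; first by move=> _ -> ->.
move=> /andP [exz pz] ey xS yS.
case zS: (z \in S); last by exists x, z; rewrite zS.
have [a [b [aS bS eab cza]]] := IH z pz ey zS yS.
by exists a, b; split=> //; apply: connect_trans cza; apply: connect1.
Qed.

Lemma path_exit_head (T : eqType) (e : rel T) (P : pred T) w t b :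
  path e w t -> b \in w :: t -> P w -> ~~ P b ->
  exists u v, [/\ u \in w :: t, v \in w :: t, e u v, P u & ~~ P v].
Proof.
elim: t w => [|w' t IH] w /=; first by move=> _ /[!inE] /eqP -> ->.
case/andP=> ew pt; rewrite in_cons => /predU1P [-> -> //|bt] Pw nPb.
case Pw': (P w'); last by exists w, w'; rewrite !inE !eqxx Pw' orbT.
have [u [v [ut vt euv Pu nPv]]] := IH w' pt bt Pw' nPb.
by exists u, v; split=> //; rewrite in_cons ?ut ?vt orbT.
Qed.

Lemma path_exit (T : eqType) (e : rel T) (P : pred T) w t a b :
  symmetric e -> path e w t -> a \in w :: t -> b \in w :: t -> P a -> ~~ P b ->
  exists u v, [/\ u \in w :: t, v \in w :: t, e u v, P u & ~~ P v].
Proof.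
move=> esym pt aw bw Pa nPb; case Pw: (P w); first exact: path_exit_head pt bw Pw nPb.
have nPa : ~~ predC P a by rewrite /= Pa.
have [u [v [ut vt euv nPu nnPv]]] := path_exit_head pt aw (negbT Pw) nPa.
by exists v, u; rewrite esym; split=> //; apply: negbNE.
Qed.

(** * Modules *)

Section Modules.
Variables (X : finType) (lt : rel X).

Local Notation cmp := (Defs.comparable lt).

Definition incomparable : rel X := fun a b => (a != b) && ~~ cmp a b.

Lemma comparableC : symmetric cmp.
Proof. by move=> a b; rewrite /Defs.comparable orbC. Qed.

Lemma incomparableC : symmetric incomparable.
Proof. by move=> a b; rewrite /incomparable eq_sym comparableC. Qed.

Lemma comparable_lt a b : lt a b -> cmp a b.
Proof. by rewrite /Defs.comparable => ->. Qed.

Lemma comparable_gt a b : lt b a -> cmp a b.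
Proof. by rewrite /Defs.comparable => ->; rewrite orbT. Qed.

Lemma module_cmpE M y m1 m2 : is_module lt M -> y \notin M ->
  m1 \in M -> m2 \in M -> cmp y m1 = cmp y m2.
Proof.
case/andP=> _ /forall_inP /(_ y); rewrite in_setC => H /H {H}.
case/orP=> /forall_inP H m1M m2M; first by rewrite !H.
by rewrite !(negbTE (H _ _)).
Qed.

Lemma module_cmp M y m1 m2 : is_module lt M -> y \notin M ->
  m1 \in M -> m2 \in M -> cmp y m1 -> cmp y m2.
Proof. by move=> Mmod yM m1M m2M; rewrite (module_cmpE Mmod yM m1M m2M). Qed.

Lemma is_moduleI M : M != set0 ->
  (forall y m1 m2, y \notin M -> m1 \in M -> m2 \in M -> cmp y m1 -> cmp y m2) ->
  is_module lt M.
Proof.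
move=> M0 H; rewrite /is_module M0; apply/forall_inP => y; rewrite in_setC => yM.
case: (boolP [exists m in M, cmp y m]) => [/exists_inP [m mM cym]|].
  by apply/orP; left; apply/forall_inP => m' m'M; apply: (H y m).
by rewrite negb_exists_in => ->; rewrite orbT.
Qed.

Lemma module_n0 M : is_module lt M -> exists m, m \in M.
Proof. by case/andP => /set0Pn. Qed.

Lemma is_moduleU M Q : is_module lt M -> is_module lt Q -> M :&: Q != set0 ->
  is_module lt (M :|: Q).
Proof.
move=> Mmod Qmod /set0Pn [c]; rewrite inE => /andP [cM cQ].
apply: is_moduleI; first by apply/set0Pn; exists c; rewrite inE cM.
move=> z k1 k2; rewrite !inE negb_or => /andP [zM zQ] k1MQ k2MQ zk1.
have zc : cmp z c.
  by case/orP: k1MQ => h1; [apply: (module_cmp Mmod) zk1 | apply: (module_cmp Qmod) zk1].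
by case/orP: k2MQ => h2; [apply: (module_cmp Mmod) zc | apply: (module_cmp Qmod) zc].
Qed.

Lemma strong_module_overlap M Q : strong_module lt M -> is_module lt Q ->
  [|| M :&: Q == set0, M \subset Q | Q \subset M].
Proof. by case/andP => _ /forallP /(_ Q) /implyP. Qed.

Lemma strong_moduleI M : is_module lt M ->
  (forall Q, is_module lt Q -> M :&: Q != set0 ->
     ~~ (M \subset Q) -> ~~ (Q \subset M) -> False) ->
  strong_module lt M.
Proof.
move=> Mmod H; rewrite /strong_module Mmod; apply/forallP => Q; apply/implyP => Qmod.
by apply/negPn/negP; rewrite !negb_or => /and3P [/(H Q Qmod)]; apply.
Qed.

Lemma strong_module_set1 x : strong_module lt [set x].
Proof.
apply: strong_moduleI => [|Q _ /set0Pn [z]].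
  apply: is_moduleI => [|y m1 m2 _ /set1P -> /set1P ->] //.
  by apply/set0Pn; exists x; rewrite inE.
by rewrite !inE => /andP [/eqP -> xQ]; rewrite sub1set xQ.
Qed.

Local Notation proper_strong := [pred M : {set X} | strong_module lt M && (M != setT)].

Lemma msmE M : (M \in msm lt) = maxset proper_strong M.
Proof.
rewrite inE; apply/and3P/maxsetP => [[Ms MT /forallP Mmax]|[/andP [Ms MT] Mmax]].
  split=> [|M' /andP [M's M'T] MM']; first by rewrite /= Ms MT.
  by apply/eqP; move/implyP: (Mmax M'); apply; rewrite M's M'T.
split=> //; apply/forallP => M'; apply/implyP => /andP [/andP [M's M'T] MM'].
by rewrite (Mmax M') //= M's.
Qed.

Lemma msm_strong M : M \in msm lt -> strong_module lt M.
Proof. by rewrite msmE => /maxsetp /andP []. Qed.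

Lemma msm_neqT M : M \in msm lt -> M != setT.
Proof. by rewrite msmE => /maxsetp /andP []. Qed.

Lemma msm_module M : M \in msm lt -> is_module lt M.
Proof. by move/msm_strong/andP => []. Qed.

Lemma msm_max M M' : M \in msm lt -> strong_module lt M' -> M' != setT ->
  M \subset M' -> M' = M.
Proof. by rewrite msmE => /maxsetsup Mmax M's M'T; apply: Mmax; rewrite /= M's. Qed.

Lemma msm_cover x : [set x] != setT -> exists2 M, M \in msm lt & x \in M.
Proof.
move=> xT; have x_ps : proper_strong [set x] by rewrite /= strong_module_set1.
have [M Mmax xM] := maxset_exists x_ps.
by exists M; rewrite ?msmE // -sub1set.
Qed.

Lemma msm_disjoint A B x : A \in msm lt -> B \in msm lt -> A != B ->
  x \in A -> x \notin B.
Proof.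
move=> Am Bm AB xA; apply/negP => xB.
case/or3P: (strong_module_overlap (msm_strong Am) (msm_module Bm)).
- by move/eqP/setP/(_ x); rewrite inE xA xB in_set0.
- by move/(msm_max Am (msm_strong Bm) (msm_neqT Bm)) => BA; rewrite BA eqxx in AB.
- by move/(msm_max Bm (msm_strong Am) (msm_neqT Am)) => AB'; rewrite AB' eqxx in AB.
Qed.

End Modules.

Section Convexity.
Variables (X : finType) (lt : rel X).
Hypotheses (irr : irreflexive lt) (trans : transitive lt).

Local Notation cmp := (Defs.comparable lt).
Local Notation incmp := (incomparable lt).

Definition co_component (a : X) : {set X} := [set z | connect incmp a z].

Lemma co_component_cmp a z d :
  z \notin co_component a -> d \in co_component a -> cmp z d.
Proof.
rewrite !inE => za ad; have dz : d != z by apply: contraNneq za => <-.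
apply/negPn/negP => nzd; move/negP: za; apply; apply: (connect_trans ad).
by apply: connect1; rewrite /incomparable dz comparableC.
Qed.

Lemma co_component_connect a d1 d2 : d1 \in co_component a ->
  d2 \in co_component a -> connect incmp d1 d2.
Proof.
rewrite !inE => ad1 ad2; apply: connect_trans ad2.
by rewrite (sym_connect_sym (@incomparableC _ lt)).
Qed.

Lemma co_component_module a : is_module lt (co_component a).
Proof.
apply: is_moduleI => [|z m1 m2 za _ m2a _]; last exact: (co_component_cmp za m2a).
by apply/set0Pn; exists a; rewrite inE connect0.
Qed.

Lemma co_component_strong a : strong_module lt (co_component a).
Proof.
apply: (strong_moduleI (co_component_module a)) => Q Qmod.
move=> /set0Pn [d0]; rewrite inE => /andP [d0D d0Q].
rewrite -!setD_eq0 => /set0Pn [d1]; rewrite inE => /andP [d1Q d1D].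
move=> /set0Pn [q]; rewrite inE => /andP [qD qQ].
have [c [w [cQ wQ cw d0c]]] := connect_exit (co_component_connect d0D d1D) d0Q d1Q.
have wD : w \in co_component a.
  by move: d0D; rewrite !inE => /connect_trans; apply; apply: connect_trans d0c (connect1 cw).
have := co_component_cmp qD wD; rewrite comparableC => /(module_cmp Qmod wQ qQ cQ).
by rewrite comparableC; apply/negP; case/andP: cw.
Qed.

Lemma co_component_setUC_module M a : is_module lt M -> a \in M ->
  is_module lt (co_component a :|: ~: M).
Proof.
move=> Mmod aM; apply: is_moduleI => [|w k1 k2].
  by apply/set0Pn; exists a; rewrite !inE connect0.
rewrite in_setU in_setC negb_or negbK => /andP [wD wM] _ k2DM _.
have [k2D|k2D] := boolP (k2 \in co_component a); first exact: co_component_cmp wD k2D.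
have k2M : k2 \notin M by move: k2DM; rewrite in_setU in_setC (negbTE k2D).
have aD : a \in co_component a by rewrite inE connect0.
by rewrite comparableC -(module_cmpE Mmod k2M aM wM) (co_component_cmp k2D aD).
Qed.

Lemma msm_co_component M a : M \in msm lt -> a \in M ->
  co_component a != setT -> M = co_component a.
Proof.
move=> Mm aM DT; apply/esym/(msm_max Mm (co_component_strong a) DT).
have aD : a \in co_component a by rewrite inE connect0.
have Q_mod := co_component_setUC_module (msm_module Mm) aM.
case/or3P: (strong_module_overlap (msm_strong Mm) Q_mod).
- by move/eqP/setP/(_ a); rewrite in_setI in_set0 aM in_setU aD.
- move/subsetP => MQ; apply/subsetP => m mM.
  by move: (MQ m mM); rewrite in_setU in_setC mM orbF.
- move/subsetP => QM; case/negP: (msm_neqT Mm); apply/eqP/setP => z.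
  rewrite inE; apply/idPn => zM.
  have /QM : z \in co_component a :|: ~: M by rewrite in_setU in_setC zM orbT.
  by rewrite (negbTE zM).
Qed.

(* An incomparability path from a to b inside M steps from below y to not
   below y; since y is comparable to all of M, that step is a pair c < y < w,
   which is not incomparable. *)
Lemma msm_convex_series M y a b : co_component a != setT -> M \in msm lt ->
  y \notin M -> a \in M -> b \in M -> lt a y -> lt y b -> False.
Proof.
move=> DT Mm yM aM bM ay yb.
have MD := msm_co_component Mm aM DT.
have aD : a \in co_component a by rewrite -MD.
have bD : b \in co_component a by rewrite -MD.
have ay' : a \in [set z | lt z y] by rewrite inE.
have by' : b \notin [set z | lt z y].
  by rewrite inE; apply/negP => /trans /(_ yb); rewrite irr.
have [c [w [cy wy cw ac]]] := connect_exit (co_component_connect aD bD) ay' by'.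
have wM : w \in M.
  by rewrite MD inE (connect_trans ac) ?connect1 //; move: aD; rewrite inE.
move: (comparable_gt ay); rewrite (module_cmpE (msm_module Mm) yM aM wM).
case/orP => [yw|wy']; last by rewrite inE wy' in wy.
rewrite inE in cy; case/andP: cw => _ /negP; apply.
exact: comparable_lt (trans cy yw).
Qed.

Definition between (M : {set X}) : {set X} :=
  [set s | [exists l in M, exists u in M, lt l s && lt s u]].

Lemma betweenP (M : {set X}) s :
  reflect (exists l u, [/\ l \in M, u \in M, lt l s & lt s u]) (s \in between M).
Proof.
rewrite inE; apply: (iffP exists_inP).
  by case=> l lM /exists_inP [u uM /andP [ls su]]; exists l, u.
by case=> l [u [lM uM ls su]]; exists l => //; apply/exists_inP; exists u; rewrite ?ls.
Qed.

Lemma comparable_side (M : {set X}) z :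
  (forall m, m \in M -> cmp z m) -> z \notin between M ->
  (forall m, m \in M -> lt m z) \/ (forall m, m \in M -> lt z m).
Proof.
move=> zM /betweenP zS.
case: (boolP [exists u in M, lt z u]) => [/exists_inP [u uM zu]|]; last first.
  rewrite negb_exists_in => /forall_inP nzu; left=> m mM.
  by case/orP: (zM m mM) => // zm; move: (nzu m mM); rewrite zm.
by right=> m mM; case/orP: (zM m mM) => // mz; case: zS; exists m, u.
Qed.

Lemma module_setU_between M : is_module lt M -> is_module lt (M :|: between M).
Proof.
move=> Mmod; have [a aM] := module_n0 Mmod.
apply: is_moduleI => [|z k1 k2]; first by apply/set0Pn; exists a; rewrite inE aM.
rewrite !in_setU negb_or => /andP [zM zS] k1K k2K zk1.
have zM_cmp m : m \in M -> cmp z m.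
  move=> mM; case/orP: k1K => [k1M|/betweenP [l [u [lM uM lk1 k1u]]]].
    exact: (module_cmp Mmod zM k1M mM zk1).
  case/orP: zk1 => [zk1|k1z].
    exact: (module_cmp Mmod zM uM mM (comparable_lt (trans zk1 k1u))).
  exact: (module_cmp Mmod zM lM mM (comparable_gt (trans lk1 k1z))).
case/orP: k2K => [/zM_cmp //|/betweenP [l [u [lM uM lk2 k2u]]]].
case: (comparable_side zM_cmp zS) => [below|above].
  exact: comparable_gt (trans k2u (below u uM)).
exact: comparable_lt (trans (above l lM) lk2).
Qed.

Local Notation proper_module := [pred Q : {set X} | is_module lt Q && (Q != setT)].

(* If a module Q overlaps K, then K :|: Q is everything, so all elements
   outside K relate to K as w0 relates to c: one of the two graphs has no
   edge leaving K. *)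
Lemma max_module_strong K : comp_connected lt -> (forall u v, connect incmp u v) ->
  maxset proper_module K -> strong_module lt K.
Proof.
move=> conn coconn /maxsetP [/andP [Kmod KT] Kmax].
apply: (strong_moduleI Kmod) => Q Qmod KQ0 nKQ nQK.
have KQT : K :|: Q = setT.
  apply/eqP; apply: contraNT nQK => KQT.
  have KQmod : proper_module (K :|: Q) by rewrite /= is_moduleU.
  by rewrite -(Kmax _ KQmod (subsetUl K Q)) subsetUr.
have outQ z : z \notin K -> z \in Q.
  by move=> zK; move: (in_setT z); rewrite -KQT in_setU (negbTE zK).
have [c] := set0Pn _ KQ0; rewrite inE => /andP [cK cQ].
have [w0] : exists w0, w0 \in K :\: Q by apply/set0Pn; rewrite setD_eq0.
rewrite inE => /andP [w0Q w0K].
have [q] : exists q, q \in Q :\: K by apply/set0Pn; rewrite setD_eq0.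
rewrite inE => /andP [qK qQ].
have uniform z k : z \notin K -> k \in K -> cmp z k = cmp w0 c.
  move=> zK kK; rewrite (module_cmpE Kmod zK kK w0K) comparableC.
  exact: (module_cmpE Qmod w0Q (outQ z zK) cQ).
case w0c: (cmp w0 c).
  have [c' [w [c'K wK /andP [_ ncw] _]]] := connect_exit (coconn c q) cK qK.
  by move: ncw; rewrite comparableC (uniform _ _ wK c'K) w0c.
have [c' [w [c'K wK cw _]]] := connect_exit (conn c q) cK qK.
by move: cw; rewrite comparableC (uniform _ _ wK c'K) w0c.
Qed.

Lemma msm_convex_prime M y a b : comp_connected lt -> (forall u v, connect incmp u v) ->
  M \in msm lt -> y \notin M -> a \in M -> b \in M -> lt a y -> lt y b -> False.
Proof.
move=> conn coconn Mm yM aM bM ay yb; have Mmod := msm_module Mm.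
pose K := M :|: between M.
have yK : y \in K by rewrite in_setU; apply/orP; right; apply/betweenP; exists a, b.
have KT : K != setT.
  apply/negP => /eqP KT.
  have [c [w [cM wM /andP [_ ncw] _]]] := connect_exit (coconn a y) aM yM.
  have /betweenP [l [u [lM _ lw _]]] : w \in between M.
    by move: (in_setT w); rewrite -KT in_setU (negbTE wM).
  by move: ncw; rewrite comparableC (module_cmp Mmod wM lM cM (comparable_gt lw)).
have Kmod : proper_module K by rewrite /= module_setU_between.
have [K' K'max KK'] := maxset_exists Kmod.
have K'T : K' != setT by case/andP: (maxsetp K'max).
have MK' : M \subset K' := subset_trans (subsetUl _ _) KK'.
have K'M := msm_max Mm (max_module_strong conn coconn K'max) K'T MK'.
by move: yM; rewrite -K'M (subsetP KK' y yK).
Qed.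

Lemma msm_convex M y a b : comp_connected lt ->
  M \in msm lt -> y \notin M -> a \in M -> b \in M -> lt a y -> lt y b -> False.
Proof.
move=> conn Mm yM aM; have [coconn|] := boolP [forall u, forall v, connect incmp u v].
  by apply: msm_convex_prime => // u v; move/forallP/(_ u)/forallP: coconn.
rewrite negb_forall => /existsP [u]; rewrite negb_forall => /existsP [v nuv].
apply: (msm_convex_series _ Mm yM aM); apply: contraNneq nuv => DT.
by apply: (co_component_connect (a := a)); rewrite DT inE.
Qed.

End Convexity.

(** * Interval representations *)

Definition interval_lt (T : Type) (l r : T -> nat) : rel T :=
  fun x y => [&& l y <= l x, r x <= r y & ~~ ((l x <= l y) && (r y <= r x))].

Definition interval_rep (T : finType) (lt : rel T) (M : {set T}) (l r : T -> nat) :=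
  (forall x, x \in M -> l x <= r x) /\ {in M &, lt =2 interval_lt l r}.

Lemma index_interval_subset (T : finType) (A B : {set T}) q la ra lb rb :
  la <= ra -> ra < size q -> uniq q ->
  (forall z, (z \in A) = (z \in q) && (la <= index z q <= ra)) ->
  (forall z, (z \in B) = (z \in q) && (lb <= index z q <= rb)) ->
  (A \subset B) = (lb <= la) && (ra <= rb).
Proof.
move=> lara raq uq HA HB.
case: q raq uq HA HB => [|d q'] // raq uq HA HB; apply/subsetP/idP.
- move=> AB; have idx i : i <= ra -> index (nth d (d :: q') i) (d :: q') = i.
    by move=> ira; rewrite index_uniq //; lia.
  have inA i : la <= i <= ra -> nth d (d :: q') i \in A.
    by move=> iA; rewrite HA mem_nth ?idx //; lia.
  have /AB := inA la (ltac:(lia)); have /AB := inA ra (ltac:(lia)).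
  by rewrite !HB !idx //; lia.
- by move=> lr z; rewrite HA HB => /andP [-> ?]; lia.
Qed.

Section Tree.
Variables (V : finType) (e : rel V).
Hypothesis tree : is_tree e.

Lemma tree_sym : symmetric e. Proof. by case: tree. Qed.

Lemma tree_connect u v : connect e u v. Proof. by case: tree => _ _ H _; apply: H. Qed.

(* The segment of q from u to v, closed by the edge v u, would be a cycle. *)
Lemma tree_sorted_chord q u v : sorted e q -> uniq q -> u \in q -> v \in q -> e u v ->
  index u q + 2 <= index v q -> False.
Proof.
move=> sq uq uqq vq euv uv2; set i := index u q in uv2; set k := index v q in uv2.
have kq : k < size q by rewrite index_mem.
pose c := drop i (take k.+1 q).
have szc : size c = k.+1 - i by rewrite size_drop size_take; case: ifP => // /negbT; lia.
have c0 : nth u c 0 = u by rewrite nth_drop addn0 nth_take ?nth_index //; lia.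
have cl : last v c = v.
  rewrite -nth_last szc nth_drop nth_take; last by lia.
  have -> : i + (k.+1 - i).-1 = k by lia.
  by rewrite nth_index.
have : cycle e c.
  have sc : sorted e c by apply/drop_sorted/take_sorted.
  rewrite (cycle_path v) cl.
  by case: c c0 sc szc {cl} => [|x c'] /=; [lia | move=> -> ->; rewrite tree_sym euv].
apply/negP; case: tree => _ _ _; apply; first by apply/drop_uniq/take_uniq.
by rewrite szc; lia.
Qed.

(* Where a tree path inside q crosses position j, its edge is a chord of q. *)
Lemma tree_path_convex q w t i j k : sorted e q -> uniq q -> path e w t ->
  {subset w :: t <= q} -> k < size q -> i <= j <= k ->
  nth w q i \in w :: t -> nth w q k \in w :: t -> nth w q j \in w :: t.
Proof.
move=> sq uq pt tq kq /andP [ij jk] it kt.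
have [-> //|ji] := eqVneq j i; have [-> //|jk'] := eqVneq j k.
apply/negPn/negP => jt.
have iq : i < size q by lia.
have Qi : index (nth w q i) q < j by rewrite index_uniq //; lia.
have nQk : ~~ (index (nth w q k) q < j) by rewrite index_uniq //; lia.
have [u [v [ut vt euv Qu nQv]]] :=
  path_exit (P := fun z => index z q < j) tree_sym pt it kt Qi nQk.
have vj : index v q != j by apply: contraNneq jt => <-; rewrite nth_index ?tq.
apply: (tree_sorted_chord sq uq (tq _ ut) (tq _ vt) euv).
by move: Qu nQv vj; lia.
Qed.

Lemma tree_path_interval q w t : sorted e q -> uniq q -> path e w t ->
  {subset w :: t <= q} ->
  exists lo hi, [/\ lo <= hi, hi < size q &
    forall z, (z \in w :: t) = (z \in q) && (lo <= index z q <= hi)].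
Proof.
move=> sq uq pt tq.
pose P n := (n < size q) && (nth w q n \in w :: t).
have PE z : z \in q -> P (index z q) = (z \in w :: t).
  by move=> zq; rewrite /P index_mem zq nth_index.
have Pw : P (index w q) by rewrite PE ?tq ?mem_head.
have P_le n : P n -> n <= size q by case/andP=> /ltnW.
case: (ex_minnP (ex_intro P _ Pw)) => lo /andP [_ lot] lomin.
case: (ex_maxnP (ex_intro P _ Pw) P_le) => hi Phi himax.
have [hiq hit] := andP Phi.
exists lo, hi; split=> // [|z]; first exact: lomin.
apply/idP/andP => [zt|[zq rng]].
  have zq := tq z zt; have Pz : P (index z q) by rewrite PE.
  by rewrite zq (lomin _ Pz) (himax _ Pz).
by have := tree_path_convex sq uq pt tq hiq rng lot hit; rewrite nth_index.
Qed.

Lemma tree_path_interval_rep (X : finType) (M : {set X}) (W : X -> {set V}) q :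
  sorted e q -> uniq q ->
  (forall x, x \in M -> is_graph_path e (W x) /\ {subset W x <= q}) ->
  exists l r, interval_rep (fun x y => W x \proper W y) M l r.
Proof.
move=> sq uq WM.
have lr_ex x : exists lr : nat * nat, x \in M ->
    [/\ lr.1 <= lr.2, lr.2 < size q &
       forall z, (z \in W x) = (z \in q) && (lr.1 <= index z q <= lr.2)].
  case xM: (x \in M); last by exists (0, 0).
  have [[v [s [ps _ Wx]]] Wq] := WM x xM.
  have sq' : {subset v :: s <= q} by move=> z zs; apply: Wq; rewrite Wx inE.
  have [lo [hi [lohi hiq Hz]]] := tree_path_interval sq uq ps sq'.
  by exists (lo, hi) => _; split=> // z; rewrite Wx inE Hz.
have [lr Hlr] := fin_all_exists lr_ex.
exists (fun x => (lr x).1), (fun x => (lr x).2); split=> [x /Hlr [] //|x y xM yM].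
have [lx rx Hx] := Hlr x xM; have [ly ry Hy] := Hlr y yM.
rewrite properE (index_interval_subset lx rx uq Hx Hy).
by rewrite (index_interval_subset ly ry uq Hy Hx) -andbA.
Qed.

Hypothesis deg2 : forall v, #|[set w | e v w]| <= 2.

(* Where a walk to z leaves q, the exit vertex is an end of q: an inner vertex
   of q would get a third neighbour. *)
Lemma tree_deg2_path_extend q z : sorted e q -> uniq q -> z \notin q ->
  exists q', [/\ sorted e q', uniq q' & size q' = (size q).+1].
Proof.
case: q => [|h s] sq uq zq; first by exists [:: z].
set q := h :: s in sq uq zq *.
have hq : h \in [set x in q] by rewrite inE mem_head.
have zq' : z \notin [set x in q] by rewrite inE.
have [a [b [aq bq eab _]]] := connect_exit (tree_connect h z) hq zq'.
rewrite !in_set in aq bq; set i := index a q.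
have nia : nth h q i = a by rewrite nth_index.
have [i0|i_pos] := posnP i.
  have ha : h = a by rewrite -nia i0.
  exists (b :: q); split; rewrite ?cons_uniq ?bq //=.
  by apply/andP; split; rewrite // ha tree_sym.
have [i_mid|i_last] := ltnP i.+1 (size q).
  have e_next : e a (nth h q i.+1) by rewrite -nia; apply: (sortedP h sq).
  have e_prev : e a (nth h q i.-1).
    rewrite tree_sym -nia -{2}(prednK i_pos); apply: (sortedP h sq); lia.
  have ne_q j : j < size q -> nth h q j != b.
    by move=> jq; apply: contraNneq bq => <-; rewrite mem_nth.
  move: (deg2 a); rewrite leqNgt => /negP; case; apply/card_gt2P.
  exists (nth h q i.+1), (nth h q i.-1), b; rewrite !inE e_next e_prev eab.
  have i_prev : i.-1 < size q by lia.
  split=> //; split; [|exact: ne_q|by rewrite eq_sym ne_q].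
  by rewrite nth_uniq //; lia.
exists (rcons q b); rewrite rcons_uniq bq uq size_rcons; split=> //.
have iq : i < size q by rewrite index_mem.
have la : last h s = a by rewrite -nia (_ : i = (size q).-1) ?nth_last //; lia.
by rewrite /= rcons_path la; apply/andP.
Qed.

Lemma tree_deg2_hamiltonian : exists q, [/\ sorted e q, uniq q & forall z, z \in q].
Proof.
pose P n := [exists t : n.-tuple V, sorted e t && uniq t].
have P0 : P 0 by apply/existsP; exists [tuple].
have P_le n : P n -> n <= #|V|.
  by case/existsP => t /andP [_ ut]; rewrite -(size_tuple t) -(card_uniqP ut) max_card.
case: (ex_maxnP (ex_intro P 0 P0) P_le) => n /existsP [t /andP [st ut]] nmax.
exists t; split=> // z; apply/negPn/negP => zt.
have [q' [sq' uq' szq']] := tree_deg2_path_extend st ut zt.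
have : P (size q') by apply/existsP; exists (in_tuple q'); rewrite sq' uq'.
by move/nmax; rewrite szq' size_tuple ltnn.
Qed.
End Tree.

Section PathGraph.
Variable n : nat.

Definition path_edge : rel 'I_n.+1 := fun i j => (i.+1 == j :> nat) || (j.+1 == i :> nat).

Lemma path_edge_sym : symmetric path_edge.
Proof. by move=> i j; rewrite /path_edge orbC. Qed.

Lemma path_edge_connect i j : connect path_edge i j.
Proof.
suff up k (i' j' : 'I_n.+1) : j' = i' + k :> nat -> connect path_edge i' j'.
  case: (leqP i j) => ij; first by apply: (up (j - i)); lia.
  by rewrite (sym_connect_sym path_edge_sym); apply: (up (i - j)); lia.
elim: k j' => [|k IH] j' E.
  by have -> : j' = i' by apply/val_inj; rewrite /= E addn0.
have ikn : i' + k < n.+1 by have := ltn_ord j'; lia.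
apply: (connect_trans (IH (inord (i' + k)) _)); first by rewrite inordK.
by apply: connect1; rewrite /path_edge inordK //; lia.
Qed.

Lemma path_edge_acyclic c : uniq c -> 3 <= size c -> ~~ cycle path_edge c.
Proof.
move=> uc sc; apply/negP => cc.
have [x0 x0c] : exists x, x \in c by case: c sc {uc cc} => // x; exists x; rewrite mem_head.
case: (arg_maxnP val x0c) => m mc mmax.
case: (rot_to mc) => i s E.
have : cycle path_edge (m :: s) by rewrite -E rot_cycle.
have : uniq (m :: s) by rewrite -E rot_uniq.
have sz : 2 < size (m :: s) by rewrite -E size_rot.
have le_m z : z \in m :: s -> z <= m by rewrite -E mem_rot => /mmax.
case: s E le_m sz => [|a [|b t]] E le_m //= _ /and4P [_ at' _ _].
case/and3P => ema _; rewrite rcons_path => /andP [_ ezm].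
have am : a <= m by apply: le_m; rewrite !inE eqxx orbT.
set z := last b t in ezm.
have zbt : z \in b :: t := mem_last b t.
have zm : z <= m by apply: le_m; rewrite (in_cons m) (in_cons a) zbt !orbT.
have az : a = z by apply: ord_inj; move: ema ezm; rewrite /path_edge; lia.
by move: at'; rewrite az zbt.
Qed.

Lemma path_edge_tree : is_tree path_edge.
Proof.
split; [exact: path_edge_sym | by move=> i; rewrite /path_edge; lia |
        exact: path_edge_connect | exact: path_edge_acyclic].
Qed.

Lemma path_edge_deg v : #|[set w | path_edge v w]| <= 2.
Proof.
rewrite leqNgt; apply/negP => /card_gt2P [x [y [z [[]]]]].
by rewrite !inE -!val_eqE /path_edge /= => hx hy hz []; lia.
Qed.

Definition segment (a b : nat) : {set 'I_n.+1} := [set i : 'I_n.+1 | a <= i <= b].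

Lemma path_edge_iota a k : a + k <= n ->
  path path_edge (inord a) [seq inord j | j <- iota a.+1 k].
Proof.
elim: k a => [|k IH] a akn //=; rewrite IH ?andbT; last by lia.
by rewrite /path_edge !inordK //; lia.
Qed.

Lemma segment_path a b : a <= b <= n -> is_graph_path path_edge (segment a b).
Proof.
move=> /andP [ab bn]; pose s := [seq inord j : 'I_n.+1 | j <- iota a (b - a).+1].
have sE : s = inord a :: [seq inord j | j <- iota a.+1 (b - a)] by [].
have inordK' j : j \in iota a (b - a).+1 -> (inord j : 'I_n.+1) = j :> nat.
  by rewrite mem_iota => ?; rewrite inordK //; lia.
exists (inord a), [seq inord j | j <- iota a.+1 (b - a)]; rewrite -sE; split.
- by apply: path_edge_iota; lia.
- rewrite map_inj_in_uniq ?iota_uniq // => i j iI jI /(congr1 (@nat_of_ord _)).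
  by rewrite !inordK' //.
- apply/setP => z; rewrite !in_set; apply/idP/mapP => [zab|[k kI ->]].
    by exists (nat_of_ord z); [rewrite mem_iota; lia | rewrite inord_val].
  by rewrite inordK' //; move: kI; rewrite mem_iota; lia.
Qed.

Lemma segment_subset a b c d : a <= b <= n -> c <= d <= n ->
  (segment a b \subset segment c d) = (c <= a) && (b <= d).
Proof.
move=> /andP [ab bn] /andP [cd dn].
have segE x y z :
    (z \in segment x y) = (z \in enum 'I_n.+1) && (x <= index z (enum 'I_n.+1) <= y).
  by rewrite inE mem_enum index_enum_ord.
by apply: index_interval_subset (segE a b) (segE c d); rewrite ?size_enum_ord ?enum_uniq.
Qed.
End PathGraph.

Lemma CPT_pullback (T Y : finType) (lt : rel T) (lt' : rel Y) (f : Y -> T) :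
  CPT lt -> (forall a b, lt' a b = lt (f a) (f b)) -> CPT lt'.
Proof.
move=> [V [e [W [tree [Wpath ltE]]]]] ltfE.
by exists V, e, (fun a => W (f a)); split=> //; split=> // a b; rewrite ltfE ltE.
Qed.

Lemma interval_rep_CI (T : finType) (lt : rel T) l r : interval_rep lt setT l r -> CI lt.
Proof.
move=> [lr ltE]; pose n := \max_(x : T) r x.
have rn x : r x <= n by apply: leq_bigmax.
have seg x : l x <= r x <= n by rewrite lr ?in_setT ?rn.
exists 'I_n.+1, (@path_edge n), (fun x => segment n (l x) (r x)).
split; [exact: path_edge_tree | exact: path_edge_deg | split=> [x|x y]].
  exact: segment_path.
by rewrite ltE ?in_setT // properE !segment_subset // -andbA.
Qed.

Lemma CI_interval_rep (T : finType) (lt : rel T) :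
  CI lt -> exists l r, interval_rep lt setT l r.
Proof.
move=> [V [e [W [tree deg [Wpath ltE]]]]].
have [q [sq uq allq]] := tree_deg2_hamiltonian tree deg.
have Wq x : x \in [set: T] -> is_graph_path e (W x) /\ {subset W x <= q}.
  by split=> // z _; apply: allq.
have [l [r [lr lrE]]] := tree_path_interval_rep tree sq uq Wq.
by exists l, r; split=> // x y xT yT; rewrite ltE lrE.
Qed.

Lemma interval_rep_dual (T : finType) (lt : rel T) M l r : interval_rep lt M l r ->
  exists l' r', interval_rep (dual_rel lt) M l' r'.
Proof.
move=> [lr ltE]; pose C := \max_(x : T) r x.
have rC x : r x <= C by apply: leq_bigmax.
exists r, (fun x => l x + C); split=> [x _|x y xM yM]; first by have := rC x; lia.
by rewrite /dual_rel ltE // /interval_lt; lia.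
Qed.

Lemma interval_rep_sub (T : finType) (lt : rel T) M l r : interval_rep lt M l r ->
  interval_rep (sub_rel lt M) setT (fun x => l (val x)) (fun x => r (val x)).
Proof.
move=> [lr ltE]; split=> [x _|x y _ _]; first exact: lr (valP x).
exact: ltE (valP x) (valP y).
Qed.

Lemma CPT_interval_rep_below (T : finType) (lt : rel T) (M : {set T}) y : CPT lt ->
  (forall m, m \in M -> lt m y) -> exists l r, interval_rep lt M l r.
Proof.
move=> [V [e [W [tree [Wpath ltE]]]]] My.
have [v [s [ps us Wy]]] := Wpath y.
have WM x : x \in M -> is_graph_path e (W x) /\ {subset W x <= v :: s}.
  move=> xM; split=> // z zx; have := My x xM.
  by rewrite ltE Wy => /proper_sub/subsetP/(_ z zx); rewrite inE.
have sq : sorted e (v :: s) by [].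
have [l [r [lr lrE]]] := tree_path_interval_rep tree sq us WM.
by exists l, r; split=> // x z xM zM; rewrite ltE lrE.
Qed.

Lemma leq_lexi a b c d K : b < K -> d < K ->
  (a * K + b <= c * K + d) = (a < c) || ((a == c) && (b <= d)).
Proof. by move=> bK dK; apply/idP/idP; nia. Qed.

Lemma ltn_lexi a b c d K : b < K -> d < K ->
  (a * K + b < c * K + d) = (a < c) || ((a == c) && (b < d)).
Proof. by move=> bK dK; rewrite ltnNge leq_lexi //; lia. Qed.

Lemma eqn_lexi a b c d K : b < K -> d < K ->
  (a * K + b == c * K + d) = (a == c) && (b == d).
Proof. by move=> bK dK; rewrite eqn_leq !leq_lexi //; lia. Qed.

(* Ties are broken lexicographically: of two intervals with the same left end
   the longer one starts first, of two with the same right end the longer one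
   ends last, and the enumeration rank separates equal intervals. *)
Lemma interval_rep_inj (T : finType) (lt : rel T) l r : interval_rep lt setT l r ->
  exists l' r', [/\ interval_rep lt setT l' r', injective l' & injective r'].
Proof.
move=> [lr ltE]; pose B := (\max_(x : T) r x).+1.
have rB x : r x < B by rewrite ltnS; apply: leq_bigmax.
have lB x : l x < B by apply: leq_ltn_trans (rB x); apply: lr; rewrite in_setT.
pose K := #|T|; pose idx (x : T) := nat_of_ord (enum_rank x).
have iK x : idx x < K by apply: ltn_ord.
have idx_inj : injective idx by move=> x y /ord_inj/enum_rank_inj.
pose l' x := (l x * B + (B.-1 - r x)) * K + idx x.
pose r' x := (r x * B + (B.-1 - l x)) * K + idx x.
exists l', r'; split; last 2 first.
- by move=> x y /eqP; rewrite eqn_lexi // => /andP [_ /eqP /idx_inj].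
- by move=> x y /eqP; rewrite eqn_lexi // => /andP [_ /eqP /idx_inj].
split=> [x _|x y _ _].
  have := lr x (in_setT x); have := rB x; have := lB x; have := iK x.
  by rewrite /l' /r' leq_lexi ?ltn_lexi ?eqn_lexi //; lia.
rewrite ltE ?in_setT //; have [<-|xy] := eqVneq x y; first by rewrite /interval_lt; lia.
have ixy : idx x != idx y by apply: contra_neq xy => /idx_inj.
have := rB x; have := rB y; have := lB x; have := lB y; have := iK x; have := iK y.
by rewrite /interval_lt /l' /r' !leq_lexi ?ltn_lexi ?eqn_lexi //; lia.
Qed.

(* Blocks get pairwise distinct outer endpoints, so the inner endpoints only
   matter within a block. *)
Lemma interval_rep_lexi (X Q : finType) (lt : rel X) (qlt : rel Q) (f : X -> Q)
    (B : Q -> {set X}) (Lq Rq : Q -> nat) (l r : Q -> X -> nat) :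
  interval_rep qlt setT Lq Rq -> injective Lq -> injective Rq ->
  (forall x, x \in B (f x)) -> (forall A, interval_rep lt (B A) (l A) (r A)) ->
  (forall x z, f x != f z -> lt x z = qlt (f x) (f z)) ->
  exists l' r', interval_rep lt setT l' r'.
Proof.
move=> [LRq qltE] Linj Rinj fB blockE ltE.
pose S := (\max_(A : Q) \max_(x : X) (l A x + r A x)).+1.
have lrS A x : l A x + r A x < S.
  rewrite ltnS; apply: leq_trans (leq_bigmax A).
  exact: (leq_bigmax (F := fun x => l A x + r A x) x).
exists (fun x => Lq (f x) * S + l (f x) x), (fun x => Rq (f x) * S + r (f x) x).
split=> [x _|x z _ _].
  have xS := lrS (f x) x; have := LRq (f x) (in_setT _).
  by have := (blockE (f x)).1 x (fB x); rewrite leq_lexi; lia.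
have xS := lrS (f x) x; have zS := lrS (f z) z.
have [fxz|ne] := eqVneq (f x) (f z).
  have zB := fB z; rewrite -fxz in zB zS.
  by rewrite ((blockE (f x)).2 x z (fB x) zB) /interval_lt -fxz !leq_lexi //; lia.
have LL : Lq (f x) != Lq (f z) by apply: contra_neq ne => /Linj.
have RR : Rq (f x) != Rq (f z) by apply: contra_neq ne => /Rinj.
by rewrite ltE // qltE ?in_setT // /interval_lt !leq_lexi //; lia.
Qed.

(** * The quotient by the maximal strong modules *)

Section Quotient.
Variables (X : finType) (lt : rel X).
Hypotheses (irr : irreflexive lt) (trans : transitive lt) (conn : comp_connected lt).

Lemma msm_lt_transfer A B x z x' z' : A \in msm lt -> B \in msm lt -> A != B ->
  x \in A -> z \in B -> x' \in A -> z' \in B -> lt x z -> lt x' z'.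
Proof.
move=> Am Bm AB xA zB x'A z'B xz.
have zA : z \notin A by apply: (msm_disjoint Bm Am); rewrite // eq_sym.
have x'B : x' \notin B by apply: (msm_disjoint Am Bm).
have x'z : lt x' z.
  move: (comparable_gt xz); rewrite (module_cmpE (msm_module Am) zA xA x'A).
  by case/orP => // zx'; case: (msm_convex irr trans conn Am zA xA x'A xz zx').
move: (comparable_lt x'z); rewrite (module_cmpE (msm_module Bm) x'B zB z'B).
by case/orP => // z'x'; case: (msm_convex irr trans conn Bm x'B z'B zB z'x' x'z).
Qed.

Lemma msm_side M : M \in msm lt -> exists2 y, y \notin M &
  (forall m, m \in M -> lt m y) \/ (forall m, m \in M -> lt y m).
Proof.
move=> Mm; have Mmod := msm_module Mm; have [m mM] := module_n0 Mmod.
have [z zM] : exists z, z \notin M.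
  apply/existsP; move: (msm_neqT Mm); apply: contraR; rewrite negb_exists => /forallP MT.
  by apply/eqP/setP => z; rewrite inE; apply/negPn.
have [a [y [aM yM ay _]]] := connect_exit (conn m z) mM zM.
exists y => //; apply: comparable_side.
  by move=> m' m'M; rewrite -(module_cmpE Mmod yM aM m'M) comparableC.
apply/betweenP => -[l [u [lM uM ly yu]]].
exact: (msm_convex irr trans conn Mm yM lM uM ly yu).
Qed.

Local Notation quotT := {M : {set X} | M \in msm lt}.

Lemma quot_ltE (A B : quotT) x z : A != B -> x \in val A -> z \in val B ->
  quot_lt lt A B = lt x z.
Proof.
move=> AB xA zB; apply/forall_inP/idP => [/(_ x xA)/forall_inP/(_ z zB) //|xz].
move=> x' x'A; apply/forall_inP => z' z'B.
exact: (msm_lt_transfer (valP A) (valP B) AB xA zB x'A z'B xz).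
Qed.

Lemma quot_lt_rep (rep : quotT -> X) : (forall A, rep A \in val A) ->
  forall A B, quot_lt lt A B = lt (rep A) (rep B).
Proof.
move=> repP A B; have [<-|AB] := eqVneq A B; last exact: quot_ltE.
rewrite irr; apply/forall_inP => /(_ _ (repP A)) /forall_inP /(_ _ (repP A)).
by rewrite irr.
Qed.

Hypotheses (cpt : CPT lt) (dcpt : CPT (dual_rel lt)).

Lemma msm_interval_rep M : M \in msm lt -> exists l r, interval_rep lt M l r.
Proof.
move=> Mm; have [y yM [below|above]] := msm_side Mm.
  exact: CPT_interval_rep_below cpt below.
have [l [r lrM]] := CPT_interval_rep_below (M := M) dcpt above.
exact: interval_rep_dual lrM.
Qed.

Lemma quot_dually_CPT : dually_CPT (quot_lt lt).
Proof.
have /fin_all_exists [rep repP] : forall A : quotT, exists x, x \in val A.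
  by move=> A; apply: module_n0 (msm_module (valP A)).
split; first exact: CPT_pullback cpt (quot_lt_rep repP).
by apply: CPT_pullback dcpt _ => A B; rewrite /dual_rel (quot_lt_rep repP).
Qed.

Lemma quot_CI_CI : CI (quot_lt lt) -> CI lt.
Proof.
move=> quotCI.
(* A one-point poset has no maximal strong module. *)
have [/existsP [x /eqP xT]|nT] := boolP [exists x : X, [set x] == setT].
  apply: (@interval_rep_CI _ _ (fun _ => 0) (fun _ => 0)); split=> // a b _ _.
  have /set1P -> : a \in [set x] by rewrite xT inE.
  have /set1P -> : b \in [set x] by rewrite xT inE.
  by rewrite irr.
have /fin_all_exists [f fP] : forall x, exists A : quotT, x \in val A.
  move=> x; move: nT; rewrite negb_exists => /forallP /(_ x).
  by case/(@msm_cover _ lt) => M Mm xM; exists (Sub M Mm).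
have /fin_all_exists [lr lrP] : forall A : quotT, exists lr : (X -> nat) * (X -> nat),
    interval_rep lt (val A) lr.1 lr.2.
  move=> A; have [l [r lrA]] := msm_interval_rep (valP A).
  by exists (l, r).
have [Lq0 [Rq0 LRq0]] := CI_interval_rep quotCI.
have [Lq [Rq [LRq Linj Rinj]]] := interval_rep_inj LRq0.
have ltE x z : f x != f z -> lt x z = quot_lt lt (f x) (f z).
  by move=> fxz; rewrite (quot_ltE fxz (fP x) (fP z)).
have [l [r lrX]] := interval_rep_lexi LRq Linj Rinj fP lrP ltE.
exact: interval_rep_CI lrX.
Qed.
End Quotient.

Theorem mainTheorem2 (X : finType) (lt : rel X) :
  is_poset lt -> dually_CPT lt -> comp_connected lt ->
  [/\ dually_CPT (quot_lt lt),
      (forall M : {set X}, M \in msm lt -> CI (sub_rel lt M)) &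
      (CI (quot_lt lt) -> CI lt)].
Proof.
move=> [irr trans] [cpt dcpt] conn; split.
- exact: quot_dually_CPT.
- move=> M Mm; have [l [r lrM]] := msm_interval_rep irr trans conn cpt dcpt Mm.
  exact: interval_rep_CI (interval_rep_sub lrM).
- exact: quot_CI_CI.
Qed.
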